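(* Let $O,O'$ be sets of Boolean functions with $O\preceq O'$, and let $\textsc{prop}$ be a finite set of propositional variables. Then $\mathrm{PL}_O[\textsc{prop}]\leq_{pc}\mathrm{PL}_{O'}[\textsc{prop}]$.
   Context: Boolean functions are maps $\{0,1\}^n\to\{0,1\}$, $n\ge1$ (constants as constant unary functions); $O\preceq O'$ means the clone generated by $O$ (smallest set containing $O$ and all projections, closed under composition) is contained in that generated by $O'$. $\mathrm{PL}_O[\textsc{prop}]$ is the set of formulas $\phi::=x\mid f(\phi_1,\dots,\phi_n)$ with $x\in\textsc{prop}$ and $f\in O$. It is viewed as the concept class whose concepts are these formulas, whose examples are the truth assignments $V:\textsc{prop}\to\{0,1\}$, and where $\lambda(\phi)$ is the set of assignments satisfying $\phi$. For concept classes $\mathcal{C}_i=(C_i,E_i,\lambda_i)$, $\mathcal{C}_1\leq_{pc}\mathcal{C}_2$ means there are $f:C_1\to C_2$ and $h:E_1\to E_2$ such that (i) for all $c\in C_1,e\in E_1$: $e\in\lambda_1(c)$ iff $h(e)\in\lambda_2(f(c))$; and (ii) for each $e\in E_2$, either $e\in\lambda_2(f(c))$ for all $c\in C_1$, or for no $c\in C_1$, or there is $e'\in E_1$ with $\{c\mid e\in\lambda_2(f(c))\}=\{c\mid e'\in\lambda_1(c)\}$. *)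

From mathcomp Require Import all_boot.
Set Implicit Arguments. Unset Strict Implicit. Unset Printing Implicit Defensive.

(* A Boolean function of arity (bf_ar f).+1 >= 1 : {0,1}^n -> {0,1}. *)
Record bfun := BFun { bf_ar : nat; bf_fn : {ffun {ffun 'I_bf_ar.+1 -> bool} -> bool} }.

Definition bfset := bfun -> Prop.

Definition proj_bf (m : nat) (i : 'I_m.+1) : bfun :=
  @BFun m [ffun x : {ffun 'I_m.+1 -> bool} => x i].

Definition comp_bf (f : bfun) (m : nat)
  (gs : 'I_(bf_ar f).+1 -> {ffun {ffun 'I_m.+1 -> bool} -> bool}) : bfun :=
  @BFun m [ffun x : {ffun 'I_m.+1 -> bool} => bf_fn f [ffun i => gs i x]].

Inductive clone (O : bfset) : bfset :=
| clone_base f : O f -> clone O f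
| clone_proj m (i : 'I_m.+1) : clone O (proj_bf i)
| clone_comp (f : bfun) (m : nat)
    (gs : 'I_(bf_ar f).+1 -> {ffun {ffun 'I_m.+1 -> bool} -> bool}) :
    clone O f -> (forall i, clone O (@BFun m (gs i))) -> clone O (comp_bf gs).

Definition clone_le (O O' : bfset) : Prop := forall f, clone O f -> clone O' f.

Inductive form (P : Type) : Type :=
| FVar : P -> form P
| FApp : bfun -> seq (form P) -> form P.

Fixpoint wf_form (P : Type) (O : bfset) (phi : form P) : Prop :=
  match phi with
  | FVar _ => True
  | FApp f args => [/\ O f, size args = (bf_ar f).+1 &
                      foldr (fun a acc => wf_form O a /\ acc) True args]
  end.

Fixpoint eval_form (P : Type) (V : P -> bool) (phi : form P) : bool :=
  match phi with
  | FVar x => V x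
  | FApp f args =>
      let vs := map (eval_form V) args in
      bf_fn f [ffun i : 'I_(bf_ar f).+1 => nth false vs i]
  end.

(* Concept classes (C, E, lambda); lam c e means e \in lambda(c) *)
Record concept_class := ConceptClass {
  cc_C : Type; cc_E : Type; cc_lam : cc_C -> cc_E -> Prop }.

Definition PL (O : bfset) (P : Type) : concept_class :=
  @ConceptClass {phi : form P | wf_form O phi} (P -> bool)
    (fun phi V => eval_form V (proj1_sig phi) = true).

Definition pc_reducible (K1 K2 : concept_class) : Prop :=
  exists (f : cc_C K1 -> cc_C K2) (h : cc_E K1 -> cc_E K2),
    (forall c e, cc_lam c e <-> cc_lam (f c) (h e)) /\
    (forall e : cc_E K2,
       (forall c, cc_lam (f c) e) \/ (forall c, ~ cc_lam (f c) e) \/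
       exists e' : cc_E K1, forall c, cc_lam (f c) e <-> cc_lam c e').

From mathcomp Require Import all_boot.
From Stdlib Require Import ClassicalEpsilon.
Set Implicit Arguments. Unset Strict Implicit.

(* Every function of the clone of O' is computed by an O'-formula in any
   O'-formulas substituted for its arguments: projections pick an argument,
   composition substitutes.  Hence each symbol of an O-formula can be replaced
   by an equivalent O'-formula, and the resulting translation, paired with the
   identity on assignments, is a pc-reduction. *)

Lemma foldr_conj_nth (T : Type) (Q : T -> Prop) (s : seq T) (d : T) :
  foldr (fun a acc => Q a /\ acc) True s <-> forall i, i < size s -> Q (nth d s i).
Proof.
elim: s => [|a s IHs] /=; first by split.
split=> [[Qa /IHs Qs] [|i] //= lt_i_s | Qs]; first exact: Qs.
split; first exact: (Qs 0).
by apply/IHs => i lt_i_s; exact: (Qs i.+1).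
Qed.

Section Formulas.
Variable P : Type.

Definition form_ind_nested (Q : form P -> Prop)
  (HVar : forall x, Q (FVar x))
  (HApp : forall f args, foldr (fun a acc => Q a /\ acc) True args -> Q (FApp f args)) :
  forall phi, Q phi :=
  fix F phi := match phi with
  | FVar x => HVar x
  | FApp f args => HApp f args
      ((fix G (s : seq (form P)) : foldr (fun a acc => Q a /\ acc) True s :=
         match s with [::] => I | a :: s' => conj (F a) (G s') end) args)
  end.

Definition expressible (O' : bfset) (g : bfun) : Prop :=
  forall a : 'I_(bf_ar g).+1 -> form P, (forall i, wf_form O' (a i)) ->
  exists psi, wf_form O' psi /\
    forall V, eval_form V psi = bf_fn g [ffun i => eval_form V (a i)].

Variable O' : bfset.

Lemma expressible_base (f : bfun) : O' f -> expressible O' f.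
Proof.
move=> O'f a wf_a; pose args := [seq a i | i <- enum 'I_(bf_ar f).+1].
have size_args : size args = (bf_ar f).+1 by rewrite size_map size_enum_ord.
have nth_args (i : 'I_(bf_ar f).+1) d : nth d args i = a i.
  by rewrite (nth_map i) ?size_enum_ord ?nth_ord_enum.
exists (FApp f args); split.
  split=> //; apply/(foldr_conj_nth _ _ (a ord0)) => i; rewrite size_args => lt_i.
  by rewrite -[i]/(nat_of_ord (Ordinal lt_i)) nth_args.
move=> V /=; congr (bf_fn f _); apply/ffunP => i.
by rewrite !ffunE (nth_map (a i)) ?size_args // nth_args.
Qed.

Lemma expressible_proj m (i : 'I_m.+1) : expressible O' (proj_bf i).
Proof. by move=> a wf_a; exists (a i); split=> // V; rewrite !ffunE. Qed.

Lemma expressible_comp (f : bfun) m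
    (gs : 'I_(bf_ar f).+1 -> {ffun {ffun 'I_m.+1 -> bool} -> bool}) :
  expressible O' f -> (forall i, expressible O' (BFun (gs i))) ->
  expressible O' (comp_bf gs).
Proof.
move=> expr_f expr_gs a wf_a.
have [psi psiP] := choice _ (fun i => expr_gs i a wf_a).
have [chi [wf_chi eval_chi]] := expr_f psi (fun i => (psiP i).1).
exists chi; split=> // V; rewrite eval_chi /= ffunE; congr (bf_fn f _).
by apply/ffunP => i; rewrite !ffunE (psiP i).2.
Qed.

Lemma clone_expressible (g : bfun) : clone O' g -> expressible O' g.
Proof.
elim=> {g} [f /expressible_base | m i | f m gs _ expr_f _ expr_gs] //.
  exact: expressible_proj.
exact: expressible_comp.
Qed.

Variable O : bfset.
Hypothesis le_O_O' : clone_le O O'.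

Lemma translate_form (phi : form P) : wf_form O phi ->
  exists psi, wf_form O' psi /\ forall V, eval_form V psi = eval_form V phi.
Proof.
elim/form_ind_nested: phi => [x _ | f args IHargs [Of size_args wf_args]].
  by exists (FVar x).
have lt_args (i : 'I_(bf_ar f).+1) : i < size args by rewrite size_args.
pose d := FApp f args.
have wf_arg (i : 'I_(bf_ar f).+1) : wf_form O (nth d args i).
  exact: (foldr_conj_nth _ _ d).1 wf_args _ (lt_args i).
have [psi psiP] :=
  choice _ (fun i : 'I__ => (foldr_conj_nth _ _ d).1 IHargs i (lt_args i) (wf_arg i)).
have expr_f := clone_expressible (le_O_O' (clone_base Of)).
have [chi [wf_chi eval_chi]] := expr_f psi (fun i => (psiP i).1).
exists chi; split=> // V; rewrite eval_chi /=; congr (bf_fn f _).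
by apply/ffunP => i; rewrite !ffunE (psiP i).2 (nth_map d).
Qed.

End Formulas.

Lemma pc_reducible_surj (K1 K2 : concept_class)
    (f : cc_C K1 -> cc_C K2) (h : cc_E K1 -> cc_E K2) :
  (forall c e, cc_lam c e <-> cc_lam (f c) (h e)) ->
  (forall e2, exists e1, h e1 = e2) ->
  pc_reducible K1 K2.
Proof.
move=> lamE h_surj; exists f, h; split=> // e2.
have [e1 <-] := h_surj e2.
by right; right; exists e1 => c; rewrite -lamE.
Qed.

Theorem propositionA6 (O O' : bfset) (P : finType) :
  clone_le O O' -> pc_reducible (PL O P) (PL O' P).
Proof.
move=> le_O_O'.
have translate (c : cc_C (PL O P)) : exists c' : cc_C (PL O' P),
    forall V, eval_form V (sval c') = eval_form V (sval c).
  have [psi [wf_psi eval_psi]] := translate_form le_O_O' (svalP c).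
  by exists (exist _ psi wf_psi).
have [f fP] := choice _ translate.
apply: (@pc_reducible_surj _ _ f id) => [c V | V]; last by exists V.
by rewrite /= fP.
Qed.
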